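(* In the message-passing model (already with $k=2$ sites), without edge duplication, any randomized protocol that decides with error probability at most $1/3$ on every input whether the graph $G$ (with $n$ vertices and $m$ edges) contains a cycle uses $\Omega(\min\{m,n\})$ bits of communication.
   Context: Message-passing model: $k$ sites $P_1,\dots,P_k$, each holding a private input; two-way point-to-point channels between every pair of sites; at the end some site outputs the answer; cost is total bits exchanged. Graph setting: $G=(V,E)$ is an undirected graph with $|V|=n$, $|E|=m$; each site $P_i$ holds a subgraph $G_i\subseteq G$ on the common vertex set, and $G$ is the union of the $G_i$. ''Without edge duplication'' means the edge sets of the $G_i$ are pairwise disjoint. $R^{\delta}(g)$ denotes the minimum, over randomized protocols that on every input output $g$ correctly with probability at least $1-\delta$, of the maximum communication over all inputs and random choices. *)

From mathcomp Require Import all_boot.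
Set Implicit Arguments. Unset Strict Implicit. Unset Printing Implicit Defensive.

(* Internal nodes: the indicated site sends one bit computed from its own input;
   leaves: the indicated site outputs a bit computed from its own input
   (and, implicitly, the transcript = position in the tree). *)
Inductive proto (X : Type) : Type :=
| OutA (h : X -> bool)
| OutB (h : X -> bool)
| SendA (f : X -> bool) (p0 p1 : proto X)
| SendB (g : X -> bool) (p0 p1 : proto X).

Arguments OutA {X} h.
Arguments OutB {X} h.
Arguments SendA {X} f p0 p1.
Arguments SendB {X} g p0 p1.

Fixpoint pout (X : Type) (p : proto X) (a b : X) : bool :=
  match p with
  | OutA h => h a
  | OutB h => h b
  | SendA f p0 p1 => if f a then pout p1 a b else pout p0 a b
  | SendB g p0 p1 => if g b then pout p1 a b else pout p0 a b
  end.

Fixpoint pcost (X : Type) (p : proto X) (a b : X) : nat :=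
  match p with
  | OutA _ | OutB _ => 0
  | SendA f p0 p1 => (if f a then pcost p1 a b else pcost p0 a b).+1
  | SendB g p0 p1 => (if g b then pcost p1 a b else pcost p0 a b).+1
  end.

Definition edge_set (n : nat) (E : {set {set 'I_n}}) : Prop :=
  forall e, e \in E -> #|e| = 2.

Definition has_cycle (n : nat) (E : {set {set 'I_n}}) : Prop :=
  exists c : seq 'I_n,
    [/\ 2 < size c, uniq c & cycle (fun u v => [set u; v] \in E) c].

(* Valid input for two sites: each holds an edge set, without edge duplication
   (disjoint), and the union graph has (at most) m edges. *)
Definition valid_input (n m : nat) (EA EB : {set {set 'I_n}}) : Prop :=
  [/\ edge_set EA, edge_set EB, [disjoint EA & EB] & #|EA :|: EB| <= m].

Arguments valid_input n m EA EB : clear implicits.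

(* A public-coin randomized protocol: a family of deterministic protocols indexed
   by the uniformly random string r : R. *)
Definition cycle_correct (n m : nat) (R : finType)
    (P : R -> proto {set {set 'I_n}}) : Prop :=
  forall EA EB, valid_input n m EA EB ->
    (has_cycle (EA :|: EB) ->
       3 * #|[set r | ~~ pout (P r) EA EB]| <= #|R|) /\
    (~ has_cycle (EA :|: EB) ->
       3 * #|[set r | pout (P r) EA EB]| <= #|R|).

Arguments cycle_correct n m {R} P.

From mathcomp Require Import all_boot all_order all_algebra zify ring.
Set Implicit Arguments. Unset Strict Implicit. Unset Printing Implicit Defensive.
Import Order.TTheory GRing.Theory Num.Theory.

(* The proof is a reduction from the inner product modulo 2 on [N = 2k] bits.
   1. Lindsey's lemma: the characters [(-1)^<x,y>] are orthogonal, so by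
      Cauchy-Schwarz every rectangle [S x T] has discrepancy
      [|sum_(x in S, y in T) (-1)^<x,y>| <= 2^(3N/2)].
   2. A deterministic protocol of cost [d] splits the input space into at
      most [2^d] rectangles, so its correlation with the inner product is at
      most [2^(d+1) 2^(3N/2)]; a public-coin protocol with error [1/3] has
      total correlation at least [4^N / 3], whence cost [>= N/2 - 3].
   3. A gadget turns [x, y] into edge sets for Alice and Bob on [4N+2]
      vertices with [4N+1] edges, without duplication, whose union contains a
      cycle iff [<x,y>] is even: a path follows the running parity of the
      inner product, and a closing edge joins its two ends.  Acyclicity in
      the odd case follows from a parent function decreasing a rank.
   4. Composing a cycle-detection protocol with the gadget gives an inner
      product protocol of the same cost; taking [k] about [min(m, n) / 8]
      yields the theorem. *)

Local Open Scope ring_scope.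

Definition bsign (b : bool) : int := if b then 1 else -1.

Lemma bsignM a b : bsign a * bsign b = bsign (a == b).
Proof. by case: a; case: b. Qed.

Section InnerProduct.
Variable N : nat.

Definition bits := {ffun 'I_N -> bool}.

Definition ip (x y : bits) : nat := (\sum_(i < N) (x i && y i))%N.
Definition ip_even (x y : bits) : bool := ~~ odd (ip x y).

Definition chi (x y : bits) : int := (-1) ^+ ip x y.

Lemma chiE x y : chi x y = bsign (ip_even x y).
Proof. by rewrite /chi /ip_even -signr_odd; case: odd. Qed.

Lemma card_bits : #|{: bits}| = (2 ^ N)%N.
Proof. by rewrite card_ffun card_bool card_ord. Qed.

Definition flip (i : 'I_N) (x : bits) : bits :=
  [ffun j => if j == i then ~~ x j else x j].

Lemma flipK i : involutive (flip i).
Proof. by move=> x; apply/ffunP=> j; rewrite !ffunE; case: eqP => // _; rewrite negbK. Qed.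

Lemma ip_split i x y :
  ip x y = ((x i && y i) + \sum_(j < N | j != i) (x j && y j))%N.
Proof. by rewrite /ip (bigD1 i). Qed.

Lemma ip_flip i x y :
  ip (flip i x) y = ((~~ x i && y i) + \sum_(j < N | j != i) (x j && y j))%N.
Proof.
rewrite (ip_split i) ffunE eqxx; congr (_ + _)%N.
by apply: eq_bigr => j /negbTE ji; rewrite ffunE ji.
Qed.

Lemma chi_flip i (x y y' : bits) : y i != y' i ->
  chi (flip i x) y * chi (flip i x) y' = - (chi x y * chi x y').
Proof.
move=> ne; rewrite /chi -!exprD !(ip_flip i) (ip_split i x y) (ip_split i x y').
move: ne; case: (x i); case: (y i); case: (y' i) => //= _;
by rewrite !add0n ?add1n ?addSn ?addnS exprS mulN1r ?opprK.
Qed.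

Lemma chi_orthogonal (y y' : bits) :
  \sum_x chi x y * chi x y' = if y == y' then (2 ^ N)%N%:Z else 0.
Proof.
case: eqP => [<-|/eqP ne].
  rewrite (eq_bigr (fun _ => 1)); last first.
    by move=> x _; rewrite /chi -exprD addnn -signr_odd odd_double.
  by rewrite sumr_const card_bits natz.
have [i nei] : exists i, y i != y' i.
  apply/existsP; apply: contraR ne => /existsPn same.
  by apply/eqP/ffunP => i; apply/eqP; have := same i; rewrite negbK.
set S := \sum_x _.
have : S = - S.
  rewrite {1}/S (reindex_inj (can_inj (flipK i))) /= -sumrN.
  by apply: eq_bigr => x _; rewrite chi_flip.
lia.
Qed.

End InnerProduct.

Lemma sum_const_int (I : finType) (P : pred I) (c : int) :
  \sum_(i | P i) c = #|P|%:Z * c.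
Proof. by rewrite sumr_const -mulr_natl natz. Qed.

(* Cauchy--Schwarz for integer sums: [(sum v)^2 <= #P * sum v^2], because
   the sum of all [(v i - v j)^2] over [P x P] is nonnegative. *)
Lemma sum_sqr_le (I : finType) (P : pred I) (v : I -> int) :
  (\sum_(i | P i) v i) ^+ 2 <= #|P|%:Z * \sum_(i | P i) v i ^+ 2.
Proof.
have sq_ge0 : 0 <= \sum_(i | P i) \sum_(j | P j) (v i - v j) ^+ 2.
  by apply: sumr_ge0 => i _; apply: sumr_ge0 => j _; apply: sqr_ge0.
have expand : \sum_(i | P i) \sum_(j | P j) (v i - v j) ^+ 2 =
   2 * (#|P|%:Z * \sum_(i | P i) v i ^+ 2) - 2 * (\sum_(i | P i) v i) ^+ 2.
  rewrite (eq_bigr (fun i => v i ^+ 2 * #|P|%:Z + \sum_(j | P j) v j ^+ 2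
        - 2 * v i * \sum_(j | P j) v j)); last first.
    move=> i _; rewrite (eq_bigr (fun j => v i ^+ 2 + v j ^+ 2 - 2 * v i * v j));
      last by move=> j _; ring.
    by rewrite sumrB big_split /= sum_const_int -mulr_sumr; ring.
  by rewrite sumrB big_split /= sum_const_int -mulr_suml -mulr_suml -mulr_sumr; ring.
rewrite expand in sq_ge0; lia.
Qed.

Section Discrepancy.
Variable N : nat.

Definition disc (S T : pred (bits N)) : int := \sum_(x | S x) \sum_(y | T y) chi x y.

(* Lindsey's lemma: [disc S T ^ 2 <= #S * #T * 2^N <= (2^N)^3]. *)
Lemma disc_sqr_le S T : disc S T ^+ 2 <= (2 ^ N)%N%:Z ^+ 3.
Proof.
set u := fun x => \sum_(y | T y) chi x y.
have cs := sum_sqr_le S u.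
have rowsS : \sum_(x | S x) u x ^+ 2 <= \sum_x u x ^+ 2.
  rewrite [X in _ <= X](bigID S) /= lerDl.
  by apply: sumr_ge0 => x _; apply: sqr_ge0.
have rows : \sum_x u x ^+ 2 = #|T|%:Z * (2 ^ N)%N%:Z.
  transitivity (\sum_(y | T y) \sum_(y' | T y') \sum_x chi x y * chi x y').
    under eq_bigr do rewrite expr2 /u mulr_suml.
    rewrite exchange_big /=; apply: eq_bigr => y _.
    by under eq_bigr do rewrite mulr_sumr; rewrite exchange_big.
  rewrite -sum_const_int; apply: eq_bigr => y Ty.
  rewrite (bigD1 y) //= chi_orthogonal eqxx [X in _ + X]big1 ?addr0 // => y' /andP [_ ne].
  by rewrite chi_orthogonal eq_sym (negbTE ne).
have cardS : #|S|%:Z <= (2 ^ N)%N%:Z by rewrite lez_nat -card_bits max_card.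
have cardT : #|T|%:Z <= (2 ^ N)%N%:Z by rewrite lez_nat -card_bits max_card.
rewrite /disc -/u; apply: le_trans cs _.
have : #|S|%:Z * \sum_(x | S x) u x ^+ 2 <= #|S|%:Z * (#|T|%:Z * (2 ^ N)%N%:Z).
  by rewrite -rows; apply: ler_wpM2l.
move/le_trans; apply; rewrite !exprS expr0 mulr1.
by rewrite ler_pM // ler_pM.
Qed.

Lemma disc_le k S T : N = k.*2 -> `|disc S T| <= (2 ^ (3 * k))%N%:Z.
Proof.
move=> Nk; have := disc_sqr_le S T.
have -> : (2 ^ N)%N%:Z ^+ 3 = ((2 ^ (3 * k)) ^ 2)%N%:Z.
  by rewrite -natz -natrX natz -!expnM Nk; congr (2 ^ _)%N%:Z; lia.
set B := (2 ^ (3 * k))%N; nia.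
Qed.

End Discrepancy.

Section Correlation.
Variable N : nat.
Local Notation bits := (bits N).

Definition agree (q : proto bits) (x y : bits) : int := bsign (pout q x y) * chi x y.

Definition corr (q : proto bits) (S T : pred bits) : int :=
  \sum_(x | S x) \sum_(y | T y) agree q x y.

Lemma agreeE q x y : agree q x y = bsign (pout q x y == ip_even x y).
Proof. by rewrite /agree chiE bsignM. Qed.

Lemma corr_empty q (S T : pred bits) :
  (forall x y, S x -> T y -> False) -> corr q S T = 0.
Proof.
move=> empty; rewrite /corr big1 // => x Sx; rewrite big1 // => y Ty.
by case: (empty x y Sx Ty).
Qed.

Lemma corr_OutA h S T :
  corr (OutA h) S T = disc (predI S h) T - disc (predI S (predC h)) T.
Proof.
rewrite /corr (bigID h) /= /disc -sumrN; congr (_ + _).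
  by apply: eq_bigr => x /andP [_ hx]; apply: eq_bigr => y _; rewrite /agree /= hx mul1r.
apply: eq_bigr => x /andP [_ /negbTE hx]; rewrite -sumrN; apply: eq_bigr => y _.
by rewrite /agree /= hx mulN1r.
Qed.

Lemma corr_OutB h S T :
  corr (OutB h) S T = disc S (predI T h) - disc S (predI T (predC h)).
Proof.
rewrite /corr /disc -sumrB; apply: eq_bigr => x _.
rewrite (bigID h) /= -sumrN; congr (_ + _); apply: eq_bigr => y /andP [_ hy].
  by rewrite /agree /= hy mul1r.
by rewrite /agree /= (negbTE hy) mulN1r.
Qed.

Lemma corr_SendA f p0 p1 S T :
  corr (SendA f p0 p1) S T = corr p1 (predI S f) T + corr p0 (predI S (predC f)) T.
Proof.
rewrite /corr (bigID f) /=; congr (_ + _); apply: eq_bigr => x /andP [_ fx];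
by apply: eq_bigr => y _; rewrite /agree /= ?fx ?(negbTE fx).
Qed.

Lemma corr_SendB g p0 p1 S T :
  corr (SendB g p0 p1) S T = corr p1 S (predI T g) + corr p0 S (predI T (predC g)).
Proof.
rewrite /corr -big_split; apply: eq_bigr => x _ /=.
rewrite (bigID g) /=; congr (_ + _); apply: eq_bigr => y /andP [_ gy];
by rewrite /agree /= ?gy ?(negbTE gy).
Qed.

Definition cost_le (q : proto bits) (S T : pred bits) (d : nat) : Prop :=
  forall x y, S x -> T y -> (pcost q x y <= d)%N.

Variable B : nat.
Hypothesis disc_B : forall S T : pred bits, `|disc S T| <= B%:Z.

(* The bound at a leaf, which splits the rectangle in two parts. *)
Lemma disc_sub_le d (S1 S2 T1 T2 : pred bits) :
  `|disc S1 T1 - disc S2 T2| <= (2 ^ d.+1 * B)%N%:Z.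
Proof.
have := disc_B S1 T1; have := disc_B S2 T2; have : (2 <= 2 ^ d.+1)%N.
  by rewrite expnS leq_pmulr ?expn_gt0.
rewrite PoszM; nia.
Qed.

(* A protocol of cost [d] cuts a rectangle into at most [2^d] subrectangles,
   on each of which it correlates with the inner product at most [2 B]. *)
Lemma corr_le q S T d : cost_le q S T d -> `|corr q S T| <= (2 ^ d.+1 * B)%N%:Z.
Proof.
elim: q S T d => [h|h|f p0 IH0 p1 IH1|g p0 IH0 p1 IH1] S T d cost.
- by rewrite corr_OutA disc_sub_le.
- by rewrite corr_OutB disc_sub_le.
- case: d cost => [|d] cost.
    by rewrite corr_empty ?normr0 // => x y Sx Ty; have := cost x y Sx Ty.
  rewrite corr_SendA expnS -mulnA PoszM.
  have /IH1 le1 : cost_le p1 (predI S f) T d.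
    by move=> x y /andP [Sx fx] Ty; have := cost x y Sx Ty; rewrite /= fx.
  have /IH0 le0 : cost_le p0 (predI S (predC f)) T d.
    by move=> x y /andP [Sx /negbTE fx] Ty; have := cost x y Sx Ty; rewrite /= fx.
  lia.
- case: d cost => [|d] cost.
    by rewrite corr_empty ?normr0 // => x y Sx Ty; have := cost x y Sx Ty.
  rewrite corr_SendB expnS -mulnA PoszM.
  have /IH1 le1 : cost_le p1 S (predI T g) d.
    by move=> x y Sx /andP [Ty gy]; have := cost x y Sx Ty; rewrite /= gy.
  have /IH0 le0 : cost_le p0 S (predI T (predC g)) d.
    by move=> x y Sx /andP [Ty /negbTE gy]; have := cost x y Sx Ty; rewrite /= gy.
  lia.
Qed.

End Correlation.

Section RandomizedLowerBound.
Variables (N : nat) (R : finType) (Q : R -> proto (bits N)).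

Definition computes_ip : Prop :=
  forall x y, (3 * #|[set r | pout (Q r) x y != ip_even x y]| <= #|R|)%N.

Lemma sum_agree x y : \sum_r agree (Q r) x y =
  #|R|%:Z - 2 * #|[set r | pout (Q r) x y != ip_even x y]|%:Z.
Proof.
set W := [set r | _].
rewrite (eq_bigr (fun r => 1 - (if r \in W then 2 else 0))); last first.
  by move=> r _; rewrite agreeE inE; case: eqP.
rewrite sumrB -big_mkcond /= !sumr_const; change #|xpredT| with #|R|.
congr (_ - _); first by rewrite natz.
by rewrite -natz mulr_natr.
Qed.

Lemma corr_sum_ge : computes_ip ->
  #|R|%:Z * ((2 ^ N)%N%:Z * (2 ^ N)%N%:Z) <= 3 * \sum_r corr (Q r) predT predT.
Proof.
move=> correct.
have -> : \sum_r corr (Q r) predT predT = \sum_x \sum_y \sum_r agree (Q r) x y.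
  by rewrite /corr exchange_big /=; apply: eq_bigr => x _; rewrite exchange_big.
rewrite (_ : _ * (_ * _) = \sum_(x : bits N) \sum_(y : bits N) #|R|%:Z); last first.
  by rewrite !sumr_const card_bits -mulrnA -mulr_natr natz PoszM mulrC.
rewrite mulr_sumr; apply: ler_sum => x _; rewrite mulr_sumr; apply: ler_sum => y _.
by rewrite sum_agree; have := correct x y; lia.
Qed.

Lemma corr_sum_le (B d : nat) : (forall S T : pred (bits N), `|disc S T| <= B%:Z) ->
  (forall r x y, (pcost (Q r) x y <= d)%N) ->
  \sum_r corr (Q r) predT predT <= #|R|%:Z * (2 ^ d.+1 * B)%N%:Z.
Proof.
move=> disc_B cost; rewrite -sum_const_int; apply: ler_sum => r _.
by apply: le_trans (ler_norm _) (corr_le disc_B _) => x y _ _.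
Qed.

Lemma ip_lower_bound k : N = k.*2 -> (0 < #|R|)%N -> computes_ip ->
  exists r x y, (k <= pcost (Q r) x y + 3)%N.
Proof.
move=> Nk R_gt0 correct.
have [/existsP [r /existsP [x /existsP [y le_k]]]|] :=
  boolP [exists r, [exists x, [exists y, k <= pcost (Q r) x y + 3]]]%N.
  by exists r, x, y.
move=> /existsPn cheap; exfalso.
have {}cheap r x y : (pcost (Q r) x y + 3 < k)%N.
  by move: (cheap r) => /existsPn /(_ x) /existsPn /(_ y); rewrite -ltnNge.
have [r0 _] : {r0 : R | true}.
  by case: (pickP (fun _ : R => true)) => [r0 _|/eq_card0 R0]; [exists r0 | rewrite R0 in R_gt0].
have k_ge4 : (3 < k)%N by have := cheap r0 [ffun=> false] [ffun=> false]; lia.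
have ub := corr_sum_le (d := k - 4) (fun S T => disc_le S T Nk)
  (fun r x y => ltac:(have := cheap r x y; lia)).
have lb := corr_sum_ge correct.
have pow : ((2 ^ N) * (2 ^ N) = 8 * (2 ^ (k - 4).+1 * 2 ^ (3 * k)))%N.
  by rewrite -!expnD (_ : 8 = 2 ^ 3)%N // -expnD Nk; congr (2 ^ _)%N; lia.
move: lb; rewrite -PoszM pow PoszM.
set X := (2 ^ _ * 2 ^ _)%N in ub *; set s := \sum_r _ in ub *.
rewrite mulrCA => lb.
have RX_gt0 : 0 < #|R|%:Z * X%:Z by rewrite mulr_gt0 // ltz_nat muln_gt0 !expn_gt0.
lia.
Qed.

End RandomizedLowerBound.

Local Close Scope ring_scope.

Section ForestCriterion.
Variables (n : nat) (E : {set {set 'I_n}}) (rk : 'I_n -> nat) (par : 'I_n -> 'I_n).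

Hypothesis edge_parent :
  forall e, e \in E -> exists v, e = [set par v; v] /\ rk (par v) < rk v.

Lemma lower_end_parent u v : [set u; v] \in E -> rk u <= rk v -> u = par v.
Proof.
case/edge_parent => w [e par_lt] le_uv.
have /set2P w_uv : w \in [set u; v] by rewrite e !inE eqxx orbT.
have /set2P p_uv : par w \in [set u; v] by rewrite e !inE eqxx.
by case: w_uv p_uv par_lt => -> [] ->; rewrite ?ltnn //; lia.
Qed.

(* On a cycle, the two neighbours of a vertex of maximal rank would both be
   its parent. *)
Lemma forest_acyclic : ~ has_cycle E.
Proof.
case=> -[|w0 c'] [size_c uniq_c cycle_c] //.
have [v v_in v_max] := arg_maxnP rk (mem_head w0 c').
have [k s rot_c] := rot_to v_in.
have size_s : size (v :: s) = size (w0 :: c') by rewrite -rot_c size_rot.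
have uniq_s : uniq (v :: s) by rewrite -rot_c rot_uniq.
have cycle_s : cycle (fun u v => [set u; v] \in E) (v :: s) by rewrite -rot_c rot_cycle.
have in_c u : u \in v :: s -> u \in w0 :: c' by rewrite -rot_c mem_rot.
case: s rot_c size_s uniq_s cycle_s in_c => [|y [|a t]] rot_c size_s uniq_s cycle_s in_c;
  rewrite -?size_s // in size_c.
move: cycle_s; rewrite /= rcons_path => /and3P [e_vy _ /andP [_ e_zv]].
have y_in : y \in w0 :: c' by apply: in_c; rewrite !inE eqxx orbT.
have z_in : last a t \in w0 :: c' by apply/in_c/mem_behead/mem_behead/mem_last.
have y_par : y = par v by apply: lower_end_parent; [rewrite setUC | apply: v_max].
have z_par : last a t = par v by apply: lower_end_parent; last apply: v_max.
move: uniq_s => /= /and3P [_ /negP y_notin _]; apply: y_notin.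
by rewrite y_par -z_par mem_last.
Qed.

End ForestCriterion.

Section Gadget.
Variables (n' N : nat).
Hypotheses (N_gt0 : 0 < N) (size_n : 4 * N + 1 <= n').
Local Notation V := 'I_n'.+1.

(* Vertex [vert i r] with [r < 4] is the [r]-th vertex of block [i]: for
   [s : bool], [vert i s] is the level-[i] vertex of parity [s] ([i <= N]) and
   [vert i (2 + s)] the middle vertex of block [i] with parity [s] ([i < N]). *)
Local Notation vert i r := (4 * i + r).

Definition vtx (u : nat) : V := inord u.
Definition E2 (u v : nat) : {set V} := [set vtx u; vtx v].

Lemma vtxK u : u <= n' -> vtx u = u :> nat.
Proof. exact: inordK. Qed.

Lemma E2C u v : E2 u v = E2 v u.
Proof. exact: setUC. Qed.

Lemma E2_eq a b c d : a <= n' -> b <= n' -> c <= n' -> d <= n' ->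
  E2 a b = E2 c d -> (a = c /\ b = d) \/ (a = d /\ b = c).
Proof.
move=> ha hb hc hd eq_ab_cd.
have mem u p q : u <= n' -> p <= n' -> q <= n' -> vtx u \in E2 p q -> u = p \/ u = q.
  by move=> hu hp hq /set2P [] /(congr1 val) /=; rewrite !vtxK //; [left | right].
have in1 p q : vtx p \in E2 p q by rewrite !inE eqxx.
have in2 p q : vtx q \in E2 p q by rewrite !inE eqxx orbT.
have := mem a c d ha hc hd; rewrite -eq_ab_cd => /(_ (in1 a b)).
have := mem b c d hb hc hd; rewrite -eq_ab_cd => /(_ (in2 a b)).
have := mem c a b hc ha hb; rewrite eq_ab_cd => /(_ (in1 c d)).
have := mem d a b hd ha hb; rewrite eq_ab_cd => /(_ (in2 c d)).
lia.
Qed.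

(* The bit [x_i], extended by [false] beyond [N]. *)
Definition bit (x : bits N) (i : nat) : bool :=
  if @insub nat (fun k => k < N) 'I_N i is Some j then x j else false.

Lemma bitE x (j : 'I_N) : bit x j = x j.
Proof. by rewrite /bit valK. Qed.

(* Alice's edges: for each block [i], level [i] is joined to the middle of
   block [i] if [x_i] holds, and directly to level [i+1] otherwise; plus the
   closing edge between levels [0] and [N] (both of parity 0).  Bob's edges
   join the middle of block [i] with parity [s] to level [i+1] with parity
   [s (+) y_i]. *)
Definition alice_edge (x : bits N) (o : option ('I_N * bool)) : {set V} :=
  if o is Some (i, s) then
    if x i then E2 (vert i s) (vert i (2 + s)) else E2 (vert i s) (vert i.+1 s)
  else E2 (vert 0 0) (vert N 0).

Definition bob_edge (y : bits N) (p : 'I_N * bool) : {set V} :=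
  E2 (vert p.1 (2 + p.2)) (vert p.1.+1 (p.2 (+) y p.1)).

Definition alice_graph x := [set alice_edge x o | o : option ('I_N * bool)].
Definition bob_graph y := [set bob_edge y p | p : 'I_N * bool].

Lemma E2_card a b : a <= n' -> b <= n' -> a != b -> #|E2 a b| = 2.
Proof. by move=> ha hb ne; rewrite cards2 -(inj_eq val_inj) /= !vtxK ?ne. Qed.

(* No edge is held by both sites: Bob's edges join a middle vertex of block
   [i] to level [i+1], which no edge of Alice does. *)
Lemma alice_bob_disjoint x y : [disjoint alice_graph x & bob_graph y].
Proof.
rewrite disjoint_subset; apply/subsetP => e /imsetP [o _ ->]; rewrite inE.
apply/negP => /imsetP [[i s] _]; rewrite /alice_edge /bob_edge /=.
have := ltn_ord i; case: o => [[j t]|]; last first.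
  by case: s (y i) => -[] /= lt_iN /E2_eq []; lia.
have := ltn_ord j; case: (x j) s t (y i) => -[] [] [] /= lt_jN lt_iN /E2_eq []; lia.
Qed.

Lemma gadget_valid m x y : 4 * N + 1 <= m ->
  valid_input n'.+1 m (alice_graph x) (bob_graph y).
Proof.
move=> size_m; split; last 1 first.
- have alice_le : #|alice_graph x| <= #|{: option ('I_N * bool)}|.
    exact: leq_imset_card.
  have bob_le : #|bob_graph y| <= #|{: 'I_N * bool}| by apply: leq_imset_card.
  rewrite card_option card_prod card_ord card_bool in alice_le bob_le.
  rewrite cardsU; apply: leq_trans (leq_subr _ _) _.
  by apply: leq_trans (leq_add alice_le bob_le) _; lia.
- move=> e /imsetP [[[i s]|] _ ->]; rewrite /alice_edge /=; last by apply: E2_card; lia.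
  by have := ltn_ord i; case: (x i) => lt_iN; apply: E2_card; case: s => /=; lia.
- move=> e /imsetP [[i s] _ ->]; rewrite /bob_edge /=; have := ltn_ord i.
  by case: s (y i) => -[] /= lt_iN; apply: E2_card; lia.
- exact: alice_bob_disjoint.
Qed.

Section Inputs.
Variables (x y : bits N).

Definition graph := alice_graph x :|: bob_graph y.

Lemma alice_in o : alice_edge x o \in graph.
Proof. by rewrite inE imset_f. Qed.

Lemma bob_in p : bob_edge y p \in graph.
Proof. by rewrite inE imset_f ?orbT. Qed.

(* Parity of the inner product of the first [i] coordinates: following the
   edges from the level-0 vertex of parity [s] through blocks [0 .. i-1]
   leads to the level-[i] vertex of parity [s (+) parity i]. *)
Definition parity (i : nat) : bool := odd (\sum_(0 <= j < i) (bit x j && bit y j)).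

Lemma parity0 : parity 0 = false.
Proof. by rewrite /parity big_geq. Qed.

Lemma parityS i : parity i.+1 = parity i (+) (bit x i && bit y i).
Proof. by rewrite /parity big_nat_recr //= oddD oddb. Qed.

Lemma parityN : parity N = odd (ip x y).
Proof. by rewrite /parity /ip big_mkord; congr odd; apply: eq_bigr => j _; rewrite !bitE. Qed.

(* The path starting at vertex 0 (level 0, parity 0), listed up to level [i]:
   it passes through the middle of block [j] exactly when [x_j] holds, and
   reaches level [i] at parity [parity i]. *)
Fixpoint track (i : nat) : seq nat :=
  if i is j.+1 then
    track j ++ (if bit x j then [:: vert j (2 + parity j)] else [::]) ++ [:: vert i (parity i)]
  else [::].

(* Edges of the graph traversed upwards (the track is increasing, hence
   duplicate-free). *)
Definition up_edge (u v : nat) : bool := (E2 u v \in graph) && (u < v).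

Lemma track_spec i : i <= N ->
  [/\ path up_edge 0 (track i), last 0 (track i) = vert i (parity i),
      all (fun v => v <= 4 * i + 1) (track i) & i <= size (track i)].
Proof.
elim: i => [|i IH] lt_iN; first by rewrite /= parity0.
have [path_i last_i all_i size_i] := IH (ltnW lt_iN).
pose j := Ordinal lt_iN.
have xj : bit x i = x j := bitE x j.
have yj : bit y i = y j := bitE y j.
split.
- rewrite /= cat_path path_i last_i /= parityS.
  have := alice_in (Some (j, parity i)); rewrite /alice_edge /= -xj.
  have := bob_in (j, parity i); rewrite /bob_edge /= -yj.
  by case: (bit x i) (bit y i) (parity i) => -[] [] /= bob alice;
    rewrite /up_edge ?bob ?alice //=; lia.
- by rewrite /= !last_cat.
- rewrite /= !all_cat; apply/and3P; split.
  + by apply: sub_all all_i => v /=; lia.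
  + by case: (bit x i) => //=; rewrite andbT; case: (parity i) => /=; lia.
  + by rewrite /= andbT; case: (parity i.+1) => /=; lia.
- by rewrite /= !size_cat /=; lia.
Qed.

(* If the inner product is even, the track ends at level [N] with parity 0,
   and the closing edge turns it into a cycle. *)
Lemma even_cycle : 1 < N -> ~~ odd (ip x y) -> has_cycle graph.
Proof.
move=> N_gt1 even_ip.
have [path_N last_N all_N size_N] := track_spec (leqnn N).
have parity_N : parity N = false by rewrite parityN (negbTE even_ip).
have in_range u : u \in 0 :: track N -> u <= n'.
  by rewrite inE => /orP [/eqP -> //| /(allP all_N)]; lia.
exists (map vtx (0 :: track N)); split.
- by rewrite size_map /=; lia.
- rewrite map_inj_in_uniq; last first.
    by move=> u v /in_range u_le /in_range v_le /(congr1 val); rewrite /= !vtxK.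
  have : path ltn 0 (track N) by apply: sub_path path_N => u v /andP [].
  exact: (@sorted_uniq _ ltn ltn_trans ltnn (0 :: track N)).
- rewrite /= -map_rcons path_map rcons_path; apply/andP; split.
    by apply: sub_path path_N => u v /andP [].
  by rewrite /= last_N parity_N /E2 setUC; apply: (alice_in None).
Qed.

Lemma bool_lt4 (b : bool) : b < 4. Proof. by case: b. Qed.
Lemma bool_le1 (b : bool) : (1 < b) = false. Proof. by case: b. Qed.
Lemma mid_lt4 (b : bool) : 2 + b < 4. Proof. by case: b. Qed.
Lemma mid_gt1 (b : bool) : 1 < 2 + b. Proof. by case: b. Qed.
Lemma odd_mid (b : bool) : odd (2 + b) = b. Proof. by case: b. Qed.

Lemma decode4 (f : nat -> nat -> nat) i r :
  r < 4 -> f (vert i r %/ 4) (vert i r %% 4) = f i r.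
Proof. by move=> lt_r4; congr f; lia. Qed.

(* The parent of a vertex: the other end of the edge through which the
   vertex is reached when the graph is read from the closing edge. *)
Definition parent_at (i r : nat) : nat :=
  if 1 < r then
    (if bit x i then vert i (odd r) else vert i.+1 (odd r (+) bit y i))
  else if i is j.+1 then
    (if bit x j then vert j (2 + (odd r (+) bit y j)) else vert j r)
  else vert N 0.

(* When [ip x y] is odd, the non-pendant vertices form a single path: the
   track of parity 1 from level 0 to level [N], the closing edge, then the
   track of parity 0 from level 0 to level [N].  [rank_at] is the position
   along that path; the pendant middle vertices (blocks with [x_i = false])
   come last. *)
Definition rank_at (i r : nat) : nat :=
  if (1 < r) && ~~ bit x i then (4 * N).+2
  else 2 * i + (1 < r) + (if parity i (+) odd r then 0 else (2 * N).+1).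

Definition parent (h : nat) : nat := parent_at (h %/ 4) (h %% 4).
Definition rank (h : nat) : nat := rank_at (h %/ 4) (h %% 4).

Lemma parentE i r : r < 4 -> parent (vert i r) = parent_at i r.
Proof. exact: decode4. Qed.

Lemma rankE i r : r < 4 -> rank (vert i r) = rank_at i r.
Proof. exact: decode4. Qed.

Lemma odd_edge_parent e : parity N -> e \in graph ->
  exists h, [/\ h <= n', parent h <= n', e = E2 (parent h) h & rank (parent h) < rank h].
Proof.
move=> parity_N; rewrite inE => /orP [] /imsetP [o _ ->]; last first.
  case: o => i s; rewrite /bob_edge /= -(bitE y); move: (ltn_ord i) => lt_iN.
  case xi: (x i); rewrite -(bitE x) in xi.
    exists (vert i.+1 (s (+) bit y i)).
    rewrite parentE ?rankE ?bool_lt4 // /parent_at /= bool_le1 xi oddb.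
    rewrite rankE ?mid_lt4 // /rank_at mid_gt1 bool_le1 xi /= parityS xi /= oddb.
    by case: s (bit y i) (parity i) => -[] [] /=; split => //; lia.
  exists (vert i (2 + s)).
  rewrite parentE ?rankE ?mid_lt4 // /parent_at mid_gt1 xi odd_mid.
  rewrite rankE ?bool_lt4 // /rank_at mid_gt1 bool_le1 xi /= E2C.
  by case: s (bit y i) (parity i.+1) => -[] [] /=; split => //; lia.
rewrite /alice_edge; case: o => [[i s]|]; last first.
  exists (vert 0 0); rewrite parentE // rankE // /parent_at /= rankE // /rank_at.
  by rewrite /= parity0 parity_N E2C /=; split => //; lia.
rewrite -(bitE x); move: (ltn_ord i) => lt_iN; case xi: (bit x i).
  exists (vert i (2 + s)); rewrite parentE ?rankE ?mid_lt4 // /parent_at mid_gt1 xi odd_mid.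
  rewrite rankE ?bool_lt4 // /rank_at mid_gt1 bool_le1 xi oddb odd_mid /=.
  by case: s (parity i) => -[] /=; split => //; lia.
exists (vert i.+1 s); rewrite parentE ?rankE ?bool_lt4 // /parent_at bool_le1 /= xi.
rewrite rankE ?bool_lt4 // /rank_at bool_le1 /= parityS xi /=.
by case: s (parity i) => -[] /=; split => //; lia.
Qed.

Lemma odd_acyclic : odd (ip x y) -> ~ has_cycle graph.
Proof.
rewrite -parityN => parity_N.
apply: (@forest_acyclic _ _ (fun v => rank v) (fun v => vtx (parent v))).
move=> e /(odd_edge_parent parity_N) [h [h_le p_le -> lt_rank]].
by exists (vtx h); rewrite /= !vtxK.
Qed.

End Inputs.
End Gadget.

Fixpoint pcomp (X Y : Type) (p : proto X) (fa fb : Y -> X) : proto Y :=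
  match p with
  | OutA h => OutA (fun a => h (fa a))
  | OutB h => OutB (fun b => h (fb b))
  | SendA f p0 p1 => SendA (fun a => f (fa a)) (pcomp p0 fa fb) (pcomp p1 fa fb)
  | SendB g p0 p1 => SendB (fun b => g (fb b)) (pcomp p0 fa fb) (pcomp p1 fa fb)
  end.

Lemma pout_comp X Y (p : proto X) (fa fb : Y -> X) a b :
  pout (pcomp p fa fb) a b = pout p (fa a) (fb b).
Proof. by elim: p => //= f p0 IH0 p1 IH1; rewrite IH0 IH1. Qed.

Lemma pcost_comp X Y (p : proto X) (fa fb : Y -> X) a b :
  pcost (pcomp p fa fb) a b = pcost p (fa a) (fb b).
Proof. by elim: p => //= f p0 IH0 p1 IH1; rewrite IH0 IH1. Qed.

Lemma cycle_protocol_computes_ip n' m N (R : finType)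
    (P : R -> proto {set {set 'I_n'.+1}}) :
  1 < N -> 4 * N + 1 <= n' -> 4 * N + 1 <= m -> cycle_correct n'.+1 m P ->
  computes_ip (fun r => pcomp (P r) (@alice_graph n' N) (@bob_graph n' N)).
Proof.
move=> N_gt1 size_n size_m correct x y.
have N_gt0 : 0 < N by lia.
have [err_cycle err_acyclic] := correct _ _ (gadget_valid N_gt0 size_n x y size_m).
case odd_ip: (odd (ip x y)).
  rewrite (@eq_finset _ _ (fun r => pout (P r) (alice_graph n' x) (bob_graph n' y))).
    by apply: err_acyclic; apply: odd_acyclic; rewrite ?odd_ip.
  by move=> r; rewrite /= pout_comp /ip_even odd_ip; case: pout.
rewrite (@eq_finset _ _ (fun r => ~~ pout (P r) (alice_graph n' x) (bob_graph n' y))).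
  by apply: err_cycle; apply: even_cycle; rewrite ?odd_ip.
by move=> r; rewrite /= pout_comp /ip_even odd_ip; case: pout.
Qed.

Theorem corollary6p2 :
  exists c N0 : nat, 0 < c /\
    forall (n m : nat) (R : finType) (P : R -> proto {set {set 'I_n}}),
      0 < #|R| -> cycle_correct n m P -> N0 <= minn m n ->
      exists EA EB (r : R),
        valid_input n m EA EB /\ minn m n <= c * pcost (P r) EA EB.
Proof.
exists 100, 50; split => // n m R P R_gt0 correct large.
case: n P correct large => [|n'] P correct large; first by rewrite minn0 in large.
have [L_le_m L_le_n] : minn m n'.+1 <= m /\ minn m n'.+1 <= n'.+1.
  by rewrite geq_minl geq_minr.
(* The gadget for [N = 2k] inner-product bits needs [8k + 2] vertices and edges. *)
pose k := (minn m n'.+1 - 2) %/ 8.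
have size_n : 4 * k.*2 + 1 <= n' by lia.
have size_m : 4 * k.*2 + 1 <= m by lia.
have [r [x [y cost]]] := ip_lower_bound (k := k) erefl R_gt0
  (cycle_protocol_computes_ip (N := k.*2) (ltac:(lia)) size_n size_m correct).
exists (alice_graph n' x), (bob_graph n' y), r; split.
  by apply: gadget_valid; lia.
by rewrite pcost_comp in cost; lia.
Qed.
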